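(* Let $E=\mathbb{R}^n$ with the Euclidean norm $\|\cdot\|_2$ and prox-function $d(x)=\frac12\|x\|_2^2$ (so $\psi_0(x)=\frac12\|x-x^0\|_2^2$). Let $f$ be convex and $L$-smooth with a minimizer $x_*$, and set $R=\|x^0-x_*\|_2$. For the iterates of Algorithm AGMsDR and $k\ge1$ define $$\hat f^k=\min_{x:\,\|x-x^0\|_2\le R}\ \frac{1}{A_k}\sum_{i=0}^{k-1}a_{i+1}\big\{f(y^i)+\langle\nabla f(y^i),x-y^i\rangle\big\}.$$ Then $\hat f^k\le f(x_* )$ and $f(x^k)-\hat f^k\le\frac{R^2}{2A_k}$; in particular $f(x^k)-f(x_* )\le f(x^k)-\hat f^k\le\frac{R^2}{2A_k}$.
   Context: A function $f:\mathbb{R}^n\to\mathbb{R}$ is $L$-smooth ($L>0$) if it is continuously differentiable and $\|\nabla f(x)-\nabla f(y)\|_2\le L\|x-y\|_2$ for all $x,y$. For $g\neq0$, $g^{\#}=g/\|g\|_2$. Algorithm AGMsDR (Euclidean case; input $x^0$, and $L$ for Option (a)): set $A_0=0$, $v^0=x^0$, $\psi_0(x)=\frac12\|x-x^0\|_2^2$. For $k=0,1,2,\dots$: 1. Choose $\beta_k\in\arg\min_{\beta\in[0,1]} f(v^k+\beta(x^k-v^k))$ and set $y^k=v^k+\beta_k(x^k-v^k)$. 2. Option (a): $x^{k+1}=y^k-\frac1L\nabla f(y^k)$, and $a_{k+1}>0$ solves $\frac{a_{k+1}^2}{A_k+a_{k+1}}=\frac1L$. Option (b): $h_{k+1}\in\arg\min_{h\ge0}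 f(y^k-h(\nabla f(y^k))^{\#})$, $x^{k+1}=y^k-h_{k+1}(\nabla f(y^k))^{\#}$, and $a_{k+1}$ is the largest solution of $f(y^k)-\frac{a_{k+1}^2}{2(A_k+a_{k+1})}\|\nabla f(y^k)\|_2^2=f(x^{k+1})$. 3. $A_{k+1}=A_k+a_{k+1}$; $\psi_{k+1}(x)=\psi_k(x)+a_{k+1}\{f(y^k)+\langle\nabla f(y^k),x-y^k\rangle\}$; $v^{k+1}=\arg\min_{x}\psi_{k+1}(x)$. All minima are assumed attained and $\nabla f(y^k)\ne0$ for all iterations considered. *)

From mathcomp Require Import all_boot.
From Stdlib Require Import Reals.
Open Scope R_scope.

Definition vec (n : nat) := 'I_n -> R.

Definition vzero {n} : vec n := fun _ => 0.
Definition vadd {n} (x y : vec n) : vec n := fun i => x i + y i.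
Definition vsub {n} (x y : vec n) : vec n := fun i => x i - y i.
Definition vscale {n} (c : R) (x : vec n) : vec n := fun i => c * x i.

Definition dot {n} (x y : vec n) : R := \big[Rplus/0]_(i < n) (x i * y i).
Definition norm2 {n} (x : vec n) : R := sqrt (dot x x).

Definition is_gradient {n} (f : vec n -> R) (g : vec n -> vec n) : Prop :=
  forall x eps, 0 < eps -> exists delta, 0 < delta /\
    forall h, norm2 h < delta ->
      Rabs (f (vadd x h) - f x - dot (g x) h) <= eps * norm2 h.

(* f is L-smooth with gradient g: differentiable with L-Lipschitz gradient
   (continuity of the gradient follows from the Lipschitz condition). *)
Definition L_smooth {n} (L : R) (f : vec n -> R) (g : vec n -> vec n) : Prop :=
  0 < L /\ is_gradient f g /\
  forall x y, norm2 (vsub (g x) (g y)) <= L * norm2 (vsub x y).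

Definition convex {n} (f : vec n -> R) : Prop :=
  forall x y t, 0 <= t <= 1 ->
    f (vadd (vscale t x) (vscale (1 - t) y)) <= t * f x + (1 - t) * f y.

Definition normalize {n} (g : vec n) : vec n := vscale (/ norm2 g) g.

Definition lin_model {n} (f : vec n -> R) (g : vec n -> vec n) (yi z : vec n) : R :=
  f yi + dot (g yi) (vsub z yi).

Definition psi {n} (f : vec n -> R) (g : vec n -> vec n) (x0 : vec n)
  (a : nat -> R) (y : nat -> vec n) (k : nat) (z : vec n) : R :=
  / 2 * (norm2 (vsub z x0)) ^ 2 +
  \big[Rplus/0]_(i < k) (a i.+1 * lin_model f g (y i) z).

(* The iterates (x, v, y, beta, h, a, A) follow Algorithm AGMsDR,
   Option (a) if opt_a = true, Option (b) if opt_a = false. *)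
Definition AGMsDR_run {n} (f : vec n -> R) (g : vec n -> vec n) (L : R)
  (x0 : vec n) (opt_a : bool)
  (x v y : nat -> vec n) (beta h a A : nat -> R) : Prop :=
  x 0%nat = x0 /\ v 0%nat = x0 /\ A 0%nat = 0 /\
  forall k : nat,
    (0 <= beta k <= 1 /\
     (forall b, 0 <= b <= 1 ->
        f (vadd (v k) (vscale (beta k) (vsub (x k) (v k))))
        <= f (vadd (v k) (vscale b (vsub (x k) (v k))))) /\
     y k = vadd (v k) (vscale (beta k) (vsub (x k) (v k)))) /\
    (if opt_a then
       x k.+1 = vsub (y k) (vscale (/ L) (g (y k))) /\
       0 < a k.+1 /\ (a k.+1) ^ 2 / (A k + a k.+1) = / L
     else
       0 <= h k.+1 /\
       (forall h', 0 <= h' ->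
          f (vsub (y k) (vscale (h k.+1) (normalize (g (y k)))))
          <= f (vsub (y k) (vscale h' (normalize (g (y k)))))) /\
       x k.+1 = vsub (y k) (vscale (h k.+1) (normalize (g (y k)))) /\
       A k + a k.+1 <> 0 /\
       f (y k) - (a k.+1) ^ 2 / (2 * (A k + a k.+1)) * (norm2 (g (y k))) ^ 2
         = f (x k.+1) /\
       (forall a', A k + a' <> 0 ->
          f (y k) - a' ^ 2 / (2 * (A k + a')) * (norm2 (g (y k))) ^ 2
            = f (x k.+1) -> a' <= a k.+1)) /\
    A k.+1 = A k + a k.+1 /\
    (forall z, psi f g x0 a y k.+1 (v k.+1) <= psi f g x0 a y k.+1 z).

Definition avg_model {n} (f : vec n -> R) (g : vec n -> vec n)
  (a A : nat -> R) (y : nat -> vec n) (k : nat) (z : vec n) : R :=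
  / A k * \big[Rplus/0]_(i < k) (a i.+1 * lin_model f g (y i) z).

Definition is_min_on_ball {n} (phi : vec n -> R) (c : vec n) (r m : R) : Prop :=
  (exists z, norm2 (vsub z c) <= r /\ phi z = m) /\
  (forall z, norm2 (vsub z c) <= r -> m <= phi z).

From HB Require Import structures.
From mathcomp Require Import all_boot.
From Stdlib Require Import Reals Lra FunctionalExtensionality.
Open Scope R_scope.

(* Estimate-sequence argument.  The exact line search on [v^k, x^k] gives
   <g(y^k), x^k - y^k> >= 0 and <g(y^k), v^k - y^k> >= 0, and both step
   options give A_{k+1} f(x^{k+1}) <= A_{k+1} f(y^k) - a_{k+1}^2/2 |g(y^k)|^2.
   Since psi_k is a quadratic with identity Hessian,
   psi_{k+1}(z) >= min psi_k + |z - v^k|^2/2 + a_{k+1} l_k(z); with convexity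
   this propagates the invariant A_k f(x^k) <= min psi_k.  As
   psi_k = |. - x^0|^2/2 + A_k * (averaged model), evaluating at the minimizer
   of the (affine) averaged model over the ball gives
   f(x^k) - fhat^k <= R^2/(2 A_k), while fhat^k <= model(x_* ) <= f(x_* ) by
   convexity. *)

Lemma Rplus_associative : associative Rplus. Proof. by move=> x y z; ring. Qed.
Lemma Rplus_commutative : commutative Rplus. Proof. by move=> x y; ring. Qed.
Lemma Rplus_left_id : left_id 0 Rplus. Proof. by move=> x; ring. Qed.
HB.instance Definition _ :=
  Monoid.isComLaw.Build R 0 Rplus Rplus_associative Rplus_commutative Rplus_left_id.

Ltac vec_ext := apply: functional_extensionality => ?; cbv [vadd vsub vscale]; ring.

Lemma big_Rplus_split m (F G : 'I_m -> R) :
  \big[Rplus/0]_(i < m) (F i + G i)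
  = \big[Rplus/0]_(i < m) F i + \big[Rplus/0]_(i < m) G i.
Proof. exact: big_split. Qed.

Lemma big_Rplus_scal m c (F : 'I_m -> R) :
  \big[Rplus/0]_(i < m) (c * F i) = c * \big[Rplus/0]_(i < m) F i.
Proof. by symmetry; apply: (big_morph (Rmult c)) => [u w|]; ring. Qed.

Lemma big_Rplus_le m (F G : 'I_m -> R) :
  (forall i, F i <= G i) -> \big[Rplus/0]_(i < m) F i <= \big[Rplus/0]_(i < m) G i.
Proof. by move=> FG; apply: (big_ind2 Rle) => *; [lra | lra | apply: FG]. Qed.

Lemma Rle_plus_mul_epsilon a b K :
  0 <= K -> (forall e, 0 < e -> a <= b + e * K) -> a <= b.
Proof.
move=> HK H; apply: Rle_plus_epsilon => eps Heps.
have He : 0 < eps / (K + 1) by apply: Rdiv_lt_0_compat; lra.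
have := H _ He; have -> : eps / (K + 1) * K = eps - eps / (K + 1) by field; lra.
lra.
Qed.

Section Euclidean.
Context {n : nat}.
Implicit Types x y z u w : vec n.

Lemma dot_addl x y z : dot (vadd x y) z = dot x z + dot y z.
Proof. by rewrite /dot -big_Rplus_split; apply: eq_bigr => i _; rewrite /vadd; ring. Qed.

Lemma dot_scalel c x z : dot (vscale c x) z = c * dot x z.
Proof. by rewrite /dot -big_Rplus_scal; apply: eq_bigr => i _; rewrite /vscale; ring. Qed.

Lemma dot_subl x y z : dot (vsub x y) z = dot x z - dot y z.
Proof.
have -> : vsub x y = vadd x (vscale (-1) y) by vec_ext.
by rewrite dot_addl dot_scalel; ring.
Qed.

Lemma dotC x y : dot x y = dot y x.
Proof. by apply: eq_bigr => i _; ring. Qed.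

Lemma dot_addr x y z : dot z (vadd x y) = dot z x + dot z y.
Proof. by rewrite dotC dot_addl !(dotC z). Qed.

Lemma dot_subr x y z : dot z (vsub x y) = dot z x - dot z y.
Proof. by rewrite dotC dot_subl !(dotC z). Qed.

Lemma dot_scaler c x z : dot z (vscale c x) = c * dot z x.
Proof. by rewrite dotC dot_scalel dotC. Qed.

Lemma dot_self_ge0 x : 0 <= dot x x.
Proof. by apply: (big_ind (Rle 0)) => *; nra. Qed.

Lemma norm2_ge0 x : 0 <= norm2 x.
Proof. exact: sqrt_pos. Qed.

Lemma norm2_sqr x : norm2 x * norm2 x = dot x x.
Proof. exact/sqrt_sqrt/dot_self_ge0. Qed.

Lemma norm2_pow2 x : norm2 x ^ 2 = dot x x.
Proof. by rewrite /= Rmult_1_r norm2_sqr. Qed.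

Lemma norm2_scale c x : norm2 (vscale c x) = Rabs c * norm2 x.
Proof.
rewrite /norm2 dot_scalel dot_scaler -Rmult_assoc sqrt_mult ?sqrt_Rsqr_abs //.
  exact: Rle_0_sqr.
exact: dot_self_ge0.
Qed.

Lemma norm2_vsubC x y : norm2 (vsub x y) = norm2 (vsub y x).
Proof.
have -> : vsub x y = vscale (-1) (vsub y x) by vec_ext.
by rewrite norm2_scale Rabs_Ropp Rabs_R1 Rmult_1_l.
Qed.

Lemma norm2_vsub_self x : norm2 (vsub x x) = 0.
Proof.
have -> : vsub x x = vscale 0 x by vec_ext.
by rewrite norm2_scale Rabs_R0 Rmult_0_l.
Qed.

Lemma dot_sqr_le x y : dot x y * dot x y <= dot x x * dot y y.
Proof.
have quad s t : 0 <= s * s * dot x x - 2 * s * t * dot x y + t * t * dot y y.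
  have := dot_self_ge0 (vsub (vscale s x) (vscale t y)).
  by rewrite !dot_subl !dot_subr !dot_scalel !dot_scaler (dotC y x); lra.
have := dot_self_ge0 x; have := dot_self_ge0 y.
case: (Req_dec (dot y y) 0) => [y0|y_neq0].
- have := quad (dot x y) ((dot x x + 1) / 2); rewrite y0; nra.
- have := quad (dot y y) (dot x y); nra.
Qed.

Lemma Rabs_dot_le x y : Rabs (dot x y) <= norm2 x * norm2 y.
Proof.
have prod_ge0 := Rmult_le_pos _ _ (norm2_ge0 x) (norm2_ge0 y).
rewrite -[norm2 x * _]Rabs_pos_eq //; apply: Rsqr_le_abs_0; rewrite /Rsqr.
have -> : norm2 x * norm2 y * (norm2 x * norm2 y)
  = (norm2 x * norm2 x) * (norm2 y * norm2 y) by ring.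
by rewrite !norm2_sqr; apply: dot_sqr_le.
Qed.

Lemma dot_eq0_of_dot_self_eq0 x y : dot x x = 0 -> dot x y = 0.
Proof.
move=> xx0; have := Rabs_dot_le x y.
have -> : norm2 x = 0 by rewrite /norm2 xx0 sqrt_0.
rewrite Rmult_0_l => abs_le0.
by have := Rle_abs (- dot x y); have := Rle_abs (dot x y); rewrite Rabs_Ropp; lra.
Qed.

Lemma half_sqr_add_dot_ge c w u : - c ^ 2 / 2 * dot w w <= / 2 * dot u u + c * dot w u.
Proof.
have := dot_self_ge0 (vadd u (vscale c w)).
by rewrite dot_addl !dot_addr !dot_scalel !dot_scaler (dotC w u); lra.
Qed.

Lemma affine_min_on_ball c s b r : 0 <= r ->
  is_min_on_ball (fun z => b + dot s (vsub z c)) c r (b - r * norm2 s).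
Proof.
move=> r_ge0; split=> [|z z_ball].
- case: (Req_dec (norm2 s) 0) => [s0|s_neq0].
    exists c; rewrite norm2_vsub_self s0 /vsub.
    split=> //; rewrite /dot big1 => [|i _]; ring.
  have s_gt0 : 0 < norm2 s by have := norm2_ge0 s; lra.
  exists (vsub c (vscale (r / norm2 s) s)).
  have -> : vsub (vsub c (vscale (r / norm2 s) s)) c = vscale (- (r / norm2 s)) s by vec_ext.
  rewrite norm2_scale dot_scaler -norm2_sqr Rabs_Ropp Rabs_pos_eq.
    by split; [right | ]; field; lra.
  by apply: Rmult_le_pos; [ | left; apply: Rinv_0_lt_compat].
- have := Rabs_dot_le s (vsub z c); have := Rle_abs (- dot s (vsub z c)).
  have := norm2_ge0 s; rewrite Rabs_Ropp; nra.
Qed.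

End Euclidean.

Section Gradient.
Context {n : nat} {f : vec n -> R} {g : vec n -> vec n}.
Hypothesis grad_fg : is_gradient f g.

Lemma gradient_along_line y d eps : 0 < eps -> exists delta, 0 < delta /\
  forall t, Rabs t < delta ->
    Rabs (f (vadd y (vscale t d)) - f y - t * dot (g y) d) <= eps * Rabs t * norm2 d.
Proof.
move=> eps_gt0; have [delta [delta_gt0 Hdelta]] := grad_fg y eps eps_gt0.
have d_ge0 := norm2_ge0 d.
exists (delta / (norm2 d + 1)); split=> [|t t_lt]; first by apply: Rdiv_lt_0_compat; lra.
have t_ge0 := Rabs_pos t.
have t_lt' : Rabs t * (norm2 d + 1) < delta.
  have -> : delta = delta / (norm2 d + 1) * (norm2 d + 1) by field; lra.
  by apply: Rmult_lt_compat_r; lra.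
have := Hdelta (vscale t d); rewrite dot_scaler norm2_scale -Rmult_assoc; apply; nra.
Qed.

Lemma ray_derivable y d t :
  derivable_pt_lim (fun s => f (vadd y (vscale s d))) t (dot (g (vadd y (vscale t d))) d).
Proof.
move=> eps eps_gt0; set p := vadd y (vscale t d).
have d_ge0 := norm2_ge0 d.
have eps'_gt0 : 0 < eps / (norm2 d + 1) by apply: Rdiv_lt_0_compat; lra.
have [delta [delta_gt0 Hdelta]] := gradient_along_line p d _ eps'_gt0.
exists (mkposreal _ delta_gt0) => s s_neq0 /= s_lt.
have -> : vadd y (vscale (t + s) d) = vadd p (vscale s d) by rewrite /p; vec_ext.
have s_gt0 : 0 < Rabs s by apply: Rabs_pos_lt.
have -> : (f (vadd p (vscale s d)) - f p) / s - dot (g p) d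
  = (f (vadd p (vscale s d)) - f p - s * dot (g p) d) / s by field.
rewrite /Rdiv Rabs_mult Rabs_inv; apply: (Rmult_lt_reg_r (Rabs s)) => //.
rewrite Rmult_assoc Rinv_l ?Rmult_1_r; last lra.
apply: Rle_lt_trans (Hdelta s s_lt) _.
have : eps / (norm2 d + 1) * norm2 d < eps.
  have -> : eps / (norm2 d + 1) * norm2 d = eps - eps / (norm2 d + 1) by field; lra.
  lra.
nra.
Qed.

Lemma ray_min_dot_ge0 y d tau : 0 < tau ->
  (forall t, 0 < t < tau -> f y <= f (vadd y (vscale t d))) -> 0 <= dot (g y) d.
Proof.
move=> tau_gt0 y_min.
apply: (Rle_plus_mul_epsilon _ _ _ (norm2_ge0 d)) => e e_gt0.
have [delta [delta_gt0 Hdelta]] := gradient_along_line y d e e_gt0.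
pose t := Rmin (delta / 2) (tau / 2).
have t_gt0 : 0 < t by apply: Rmin_glb_lt; lra.
have t_le : t <= delta / 2 /\ t <= tau / 2 by split; [apply: Rmin_l | apply: Rmin_r].
have := Hdelta t; rewrite Rabs_pos_eq; last lra.
have := Rle_abs (f (vadd y (vscale t d)) - f y - t * dot (g y) d).
have := y_min t; nra.
Qed.

Lemma segment_argmin_dot_ge0 v x b y : 0 <= b <= 1 ->
  (forall b', 0 <= b' <= 1 -> f y <= f (vadd v (vscale b' (vsub x v)))) ->
  y = vadd v (vscale b (vsub x v)) ->
  0 <= dot (g y) (vsub x y) /\ 0 <= dot (g y) (vsub v y).
Proof.
move=> b01 y_min y_def; set d := vsub x v.
have -> : vsub x y = vscale (1 - b) d by rewrite y_def /d; vec_ext.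
have -> : vsub v y = vscale (- b) d by rewrite y_def /d; vec_ext.
rewrite !dot_scaler.
have forward : b < 1 -> 0 <= dot (g y) d.
  move=> b_lt1; apply: (ray_min_dot_ge0 _ _ (1 - b)) => [|t t_in]; first lra.
  have -> : vadd y (vscale t d) = vadd v (vscale (b + t) d) by rewrite y_def /d; vec_ext.
  by apply: y_min; lra.
have backward : 0 < b -> 0 <= - dot (g y) d.
  move=> b_gt0; suff : 0 <= dot (g y) (vscale (-1) d) by rewrite dot_scaler; lra.
  apply: (ray_min_dot_ge0 _ _ b) => // t t_in.
  have -> : vadd y (vscale t (vscale (-1) d)) = vadd v (vscale (b - t) d)
    by rewrite y_def /d; vec_ext.
  by apply: y_min; lra.
split.
- by case: (Req_dec b 1) => [->|b_neq1]; [lra | apply: Rmult_le_pos; [lra | apply: forward; lra]].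
- by case: (Req_dec b 0) => [->|b_neq0]; [lra | have := backward ltac:(lra); nra].
Qed.

Hypothesis conv_f : convex f.

Lemma convex_gradient_ineq y z : f y + dot (g y) (vsub z y) <= f z.
Proof.
set d := vsub z y.
apply: (Rle_plus_mul_epsilon _ _ _ (norm2_ge0 d)) => e e_gt0.
have [delta [delta_gt0 Hdelta]] := gradient_along_line y d e e_gt0.
pose t := Rmin (delta / 2) (1 / 2).
have t_gt0 : 0 < t by apply: Rmin_glb_lt; lra.
have t_le : t <= delta / 2 /\ t <= 1 / 2 by split; [apply: Rmin_l | apply: Rmin_r].
have := conv_f z y t ltac:(lra).
have -> : vadd (vscale t z) (vscale (1 - t) y) = vadd y (vscale t d) by rewrite /d; vec_ext.
have := Hdelta t; rewrite Rabs_pos_eq; last lra.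
have := Rle_abs (- (f (vadd y (vscale t d)) - f y - t * dot (g y) d)).
rewrite Rabs_Ropp; nra.
Qed.

End Gradient.

Section Smooth.
Context {n : nat} {f : vec n -> R} {g : vec n -> vec n} {L : R}.
Hypothesis smooth_fg : L_smooth L f g.

Lemma smooth_upper_bound y d : f (vadd y d) <= f y + dot (g y) d + L / 2 * dot d d.
Proof.
have [L_gt0 [grad_fg Lip]] := smooth_fg.
(* The mean value theorem is applied to the ray function minus its quadratic
   model; applied to the ray function alone it would only give the constant L. *)
pose phi s := f (vadd y (vscale s d)) - dot (g y) d * s - L / 2 * dot d d * (s * s).
pose dphi s := dot (g (vadd y (vscale s d))) d - dot (g y) d * 1
  - L / 2 * dot d d * (1 * s + s * 1).
have phi_deriv s : derivable_pt_lim phi s (dphi s).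
  apply: (derivable_pt_lim_minus (fun s => _ - _ * s) (fun s => _ * (s * s))).
    apply: (derivable_pt_lim_minus _ (fun s => _ * s)); first exact: ray_derivable.
    exact: (derivable_pt_lim_scal id _ _ _ (derivable_pt_lim_id s)).
  apply: (derivable_pt_lim_scal (fun s => s * s)).
  exact: (derivable_pt_lim_mult id id _ _ _ (derivable_pt_lim_id s) (derivable_pt_lim_id s)).
have [c [mvt c01]] := MVT_cor2 phi dphi 0 1 Rlt_0_1 (fun c _ => phi_deriv c).
have dphi_le0 : dphi c <= 0.
  set p := vadd y (vscale c d).
  have := Rle_abs (dot (vsub (g p) (g y)) d); have := Rabs_dot_le (vsub (g p) (g y)) d.
  have := Lip p y; have -> : vsub p y = vscale c d by rewrite /p; vec_ext.
  rewrite norm2_scale Rabs_pos_eq ?dot_subl; last lra.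
  move=> /(Rmult_le_compat_r _ _ _ (norm2_ge0 d)).
  rewrite /dphi -/p -norm2_sqr; lra.
have at0 : vadd y (vscale 0 d) = y by vec_ext.
have at1 : vadd y (vscale 1 d) = vadd y d by vec_ext.
move: mvt; rewrite /phi at0 at1; lra.
Qed.

Lemma gradient_step_decrease y :
  f (vsub y (vscale (/ L) (g y))) <= f y - / (2 * L) * dot (g y) (g y).
Proof.
have L_gt0 := proj1 smooth_fg.
have := smooth_upper_bound y (vscale (- / L) (g y)).
have -> : vadd y (vscale (- / L) (g y)) = vsub y (vscale (/ L) (g y)) by vec_ext.
rewrite !dot_scalel !dot_scaler.
have -> : L / 2 * (- / L * (- / L * dot (g y) (g y))) = / (2 * L) * dot (g y) (g y)
  by field; lra.
have : / L * dot (g y) (g y) = 2 * (/ (2 * L) * dot (g y) (g y)) by field; lra.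
lra.
Qed.

End Smooth.

Lemma largest_root_ge0 (A0 G D a : R) : 0 <= A0 -> 0 <= G -> 0 <= D ->
  A0 + a <> 0 -> a ^ 2 / (2 * (A0 + a)) * G = D ->
  (forall a', A0 + a' <> 0 -> a' ^ 2 / (2 * (A0 + a')) * G = D -> a' <= a) ->
  0 <= a.
Proof.
move=> A0_ge0 G_ge0 D_ge0 Aa_neq0 a_root a_largest.
case: (Req_dec G 0) => [G0|G_neq0].
  suff : Rabs a + 1 <= a by have := Rle_abs a; lra.
  apply: a_largest; first by have := Rabs_pos a; lra.
  by rewrite -a_root G0 !Rmult_0_r.
pose c := a ^ 2 / (2 * (A0 + a)).
have c_ge0 : 0 <= c by rewrite -/c in a_root; nra.
have a_sqr : a ^ 2 = 2 * (A0 + a) * c by rewrite /c; field.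
case: (Req_dec c 0) => [c0|c_neq0]; first by rewrite c0 in a_sqr; nra.
pose s := sqrt (c ^ 2 + 2 * c * A0).
have s_ge0 : 0 <= s by apply: sqrt_pos.
have s_sqr : s * s = c ^ 2 + 2 * c * A0 by apply: sqrt_sqrt; nra.
(* [c + s] is the nonnegative root of [a'^2 = 2 (A0 + a') c]. *)
apply: Rle_trans (a_largest (c + s) _ _); [lra | lra |].
have -> : (c + s) ^ 2 / (2 * (A0 + (c + s))) = c by field_simplify_eq; [nra | lra].
exact: a_root.
Qed.

Definition grad_sum {n} (g : vec n -> vec n) (a : nat -> R) (y : nat -> vec n) (k : nat)
  : vec n := fun j => \big[Rplus/0]_(i < k) (a i.+1 * g (y i) j).

Section AGMsDR.
Context {n : nat} {f : vec n -> R} {g : vec n -> vec n} {L : R} {x0 : vec n}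
  {opt_a : bool} {x v y : nat -> vec n} {beta h a A : nat -> R}.

Local Notation Psi := (psi f g x0 a y).
Local Notation model := (avg_model f g a A y).

Lemma dot_grad_sum k w :
  \big[Rplus/0]_(i < k) (a i.+1 * dot (g (y i)) w) = dot (grad_sum g a y k) w.
Proof.
rewrite /dot /grad_sum.
under eq_bigr => i _ do rewrite -big_Rplus_scal.
rewrite exchange_big; apply: eq_bigr => j _.
by rewrite Rmult_comm -big_Rplus_scal; apply: eq_bigr => i _; ring.
Qed.

Lemma lin_sum_affine k z p :
  \big[Rplus/0]_(i < k) (a i.+1 * lin_model f g (y i) z)
  = \big[Rplus/0]_(i < k) (a i.+1 * lin_model f g (y i) p) + dot (grad_sum g a y k) (vsub z p).
Proof.
rewrite -dot_grad_sum -big_Rplus_split; apply: eq_bigr => i _.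
by rewrite /lin_model !dot_subr; ring.
Qed.

Lemma avg_model_affine k z :
  model k z = model k x0 + dot (vscale (/ A k) (grad_sum g a y k)) (vsub z x0).
Proof. by rewrite /avg_model (lin_sum_affine k z x0) dot_scalel; ring. Qed.

Lemma psi_avg_model k z : A k <> 0 ->
  Psi k z = / 2 * norm2 (vsub z x0) ^ 2 + A k * model k z.
Proof. by move=> A_neq0; rewrite /psi /avg_model -Rmult_assoc Rinv_r // Rmult_1_l. Qed.

Lemma psi0 z : Psi 0 z = / 2 * norm2 (vsub z x0) ^ 2.
Proof. by rewrite /psi big_ord0; ring. Qed.

Lemma psiS k z : Psi k.+1 z = Psi k z + a k.+1 * lin_model f g (y k) z.
Proof. by rewrite /psi big_ord_recr /=; ring. Qed.

Lemma psi_expand k p z : Psi k z = Psi k p + / 2 * dot (vsub z p) (vsub z p)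
  + dot (vadd (vsub p x0) (grad_sum g a y k)) (vsub z p).
Proof.
rewrite /psi !norm2_pow2 (lin_sum_affine k z p).
have -> : vsub z x0 = vadd (vsub z p) (vsub p x0) by vec_ext.
move: (vsub z p) (vsub p x0) => d e.
by rewrite !dot_addl !dot_addr (dotC d e); lra.
Qed.

Lemma psi_ge_min_add_sqr k p : (forall z, Psi k p <= Psi k z) ->
  forall z, Psi k p + / 2 * dot (vsub z p) (vsub z p) <= Psi k z.
Proof.
move=> p_min z; set u := vadd (vsub p x0) (grad_sum g a y k).
have u0 : dot u u = 0.
  have := p_min (vsub p u); rewrite (psi_expand k p (vsub p u)) -/u.
  have -> : vsub (vsub p u) p = vscale (-1) u by vec_ext.
  by rewrite !dot_scalel !dot_scaler; have := dot_self_ge0 u; lra.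
by rewrite (psi_expand k p z) -/u (dot_eq0_of_dot_self_eq0 u (vsub z p) u0); lra.
Qed.

Hypothesis smooth_fg : L_smooth L f g.
Hypothesis conv_f : convex f.
Hypothesis run : AGMsDR_run f g L x0 opt_a x v y beta h a A.

Lemma A_succ k : A k.+1 = A k + a k.+1.
Proof. by have [_ [_ [_ run_k]]] := run; have [_ [_ [-> _]]] := run_k k. Qed.

Lemma A_sum k : A k = \big[Rplus/0]_(i < k) a i.+1.
Proof.
elim: k => [|k IH]; first by rewrite big_ord0; have [_ [_ [-> _]]] := run.
by rewrite big_ord_recr /= -IH A_succ.
Qed.

Lemma step_decrease k : 0 <= A k ->
  0 <= a k.+1 /\ 0 < A k.+1 /\
  A k.+1 * f (x k.+1) <= A k.+1 * f (y k) - a k.+1 ^ 2 / 2 * dot (g (y k)) (g (y k)).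
Proof.
move=> A_ge0; rewrite A_succ; have G_ge0 := dot_self_ge0 (g (y k)).
have [_ [_ [_ run_k]]] := run; have [_ [step _]] := run_k k.
case: opt_a step => [[x_succ [a_gt0 a_eq]] | [_ [h_min [x_succ [Aa_neq0 [a_root a_max]]]]]].
- have L_gt0 := proj1 smooth_fg.
  have a_sqr : a k.+1 ^ 2 = (A k + a k.+1) / L by rewrite /Rdiv -a_eq; field; lra.
  have := gradient_step_decrease smooth_fg (y k); rewrite -x_succ => descent.
  split; [lra | split; [lra |]].
  have := Rmult_le_compat_l (A k + a k.+1) _ _ ltac:(lra) descent.
  have : (A k + a k.+1) * (/ (2 * L) * dot (g (y k)) (g (y k)))
    = a k.+1 ^ 2 / 2 * dot (g (y k)) (g (y k)) by rewrite a_sqr; field; lra.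
  lra.
- rewrite norm2_pow2 in a_root a_max.
  have descent : f (x k.+1) <= f (y k).
    have := h_min 0 (Rle_refl 0); rewrite -x_succ.
    by have -> : vsub (y k) (vscale 0 (normalize (g (y k)))) = y k by vec_ext.
  have a_ge0 : 0 <= a k.+1.
    apply: (largest_root_ge0 (A k) (dot (g (y k)) (g (y k))) (f (y k) - f (x k.+1)));
      rewrite // ?a_root; try lra.
    by move=> a' Aa'_neq0 a'_root; apply: a_max => //; lra.
  split; [done | split; [lra |]].
  by apply: Req_le; rewrite -a_root; field.
Qed.

Lemma A_ge0 k : 0 <= A k.
Proof.
elim: k => [|k IH]; first by have [_ [_ [-> _]]] := run; lra.
exact: Rlt_le (proj1 (proj2 (step_decrease k IH))).
Qed.

Lemma a_ge0 k : 0 <= a k.+1.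
Proof. exact: proj1 (step_decrease k (A_ge0 k)). Qed.

Lemma A_gt0 k : 0 < A k.+1.
Proof. exact: proj1 (proj2 (step_decrease k (A_ge0 k))). Qed.

Lemma v_min k z : Psi k (v k) <= Psi k z.
Proof.
have [_ [v0 [_ run_k]]] := run; case: k => [|k].
  by rewrite v0 !psi0 norm2_vsub_self; have := pow2_ge_0 (norm2 (vsub z x0)); lra.
by have [_ [_ [_ v_succ_min]]] := run_k k; apply: v_succ_min.
Qed.

Lemma estimate_invariant k : A k * f (x k) <= Psi k (v k).
Proof.
elim: k => [|k IH].
  have [_ [_ [-> _]]] := run; rewrite Rmult_0_l psi0.
  by have := pow2_ge_0 (norm2 (vsub (v 0) x0)); lra.
have [_ [_ [_ run_k]]] := run; have [[b01 [y_min y_def]] _] := run_k k.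
have [_ [_ decrease]] := step_decrease k (A_ge0 k).
have [gx_ge0 gv_ge0] :
    0 <= dot (g (y k)) (vsub (x k) (y k)) /\ 0 <= dot (g (y k)) (vsub (v k) (y k)).
  by apply: (segment_argmin_dot_ge0 (proj1 (proj2 smooth_fg)) (v k) (x k) (beta k));
    rewrite // y_def.
rewrite A_succ psiS; set w := v k.+1.
have strong := psi_ge_min_add_sqr k (v k) (v_min k) w.
have sqr := half_sqr_add_dot_ge (a k.+1) (g (y k)) (vsub w (v k)).
have conv := convex_gradient_ineq (proj1 (proj2 smooth_fg)) conv_f (y k) (x k).
have -> : lin_model f g (y k) w
  = f (y k) + dot (g (y k)) (vsub w (v k)) + dot (g (y k)) (vsub (v k) (y k))
  by rewrite /lin_model !dot_subr; ring.
have := Rmult_le_compat_l _ _ _ (A_ge0 k) conv.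
have := Rmult_le_pos _ _ (A_ge0 k) gx_ge0; have := Rmult_le_pos _ _ (a_ge0 k) gv_ge0.
rewrite A_succ in decrease; lra.
Qed.

Lemma avg_model_le k z : model k.+1 z <= f z.
Proof.
rewrite /avg_model; apply: (Rmult_le_reg_l (A k.+1)); first exact: A_gt0.
rewrite -Rmult_assoc Rinv_r ?Rmult_1_l; last by have := A_gt0 k; lra.
rewrite [A k.+1 * _]Rmult_comm A_sum -big_Rplus_scal.
apply: big_Rplus_le => i; rewrite Rmult_comm.
apply: Rmult_le_compat_r; first exact: a_ge0.
exact: (convex_gradient_ineq (proj1 (proj2 smooth_fg)) conv_f).
Qed.

Lemma gap_bound k z r : norm2 (vsub z x0) <= r ->
  f (x k.+1) - model k.+1 z <= r ^ 2 / (2 * A k.+1).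
Proof.
move=> z_ball; have A_pos := A_gt0 k.
have z_sqr : norm2 (vsub z x0) ^ 2 <= r ^ 2.
  by apply: pow_incr; split; [apply: norm2_ge0 |].
apply: (Rmult_le_reg_l (2 * A k.+1)); first lra.
have -> : 2 * A k.+1 * (r ^ 2 / (2 * A k.+1)) = r ^ 2 by field; lra.
have := estimate_invariant k.+1; have := v_min k.+1 z.
rewrite (psi_avg_model _ z); lra.
Qed.

End AGMsDR.

Theorem mainTheorem5 (n : nat) (f : vec n -> R) (g : vec n -> vec n) (L : R)
  (x0 xs : vec n) (opt_a : bool)
  (x v y : nat -> vec n) (beta h a A : nat -> R) :
  L_smooth L f g ->
  convex f ->
  (forall z, f xs <= f z) ->
  AGMsDR_run f g L x0 opt_a x v y beta h a A ->
  (forall k, g (y k) <> vzero) ->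
  forall k : nat, (1 <= k)%nat ->
  exists fhat,
    is_min_on_ball (avg_model f g a A y k) x0 (norm2 (vsub x0 xs)) fhat /\
    fhat <= f xs /\
    f (x k) - fhat <= (norm2 (vsub x0 xs)) ^ 2 / (2 * A k) /\
    f (x k) - f xs <= f (x k) - fhat.
Proof.
move=> smooth_fg conv_f _ run _ [|k] // _.
set r := norm2 (vsub x0 xs).
pose s := vscale (/ A k.+1) (grad_sum g a y k.+1).
have model_affine : avg_model f g a A y k.+1
    = fun z => avg_model f g a A y k.+1 x0 + dot s (vsub z x0).
  by apply: functional_extensionality => z; apply: avg_model_affine.
have := affine_min_on_ball x0 s (avg_model f g a A y k.+1 x0) r (norm2_ge0 _).
rewrite -model_affine => fhat_min.
exists (avg_model f g a A y k.+1 x0 - r * norm2 s).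
have xs_ball : norm2 (vsub xs x0) <= r by rewrite norm2_vsubC; apply: Rle_refl.
have fhat_le := Rle_trans _ _ _ (proj2 fhat_min xs xs_ball)
  (avg_model_le smooth_fg conv_f run k xs).
split; [exact: fhat_min | split; [exact: fhat_le | split; [| lra]]].
have [[zs [zs_ball <-]] _] := fhat_min.
exact: gap_bound smooth_fg conv_f run k zs r zs_ball.
Qed.
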